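(* There exist a closed flat surface $N$ and a configuration of two disjoint embedded open metric disks of the same diameter $h$ in $N$, with centers at distance $d$, realizing the supremum of $h\sqrt{4h^2+d^2}/\mathsf{vol}(N)$ over all closed flat surfaces and all such configurations of two disjoint disks of equal diameter.
   Context: A closed flat surface is a flat torus or flat Klein bottle; $\mathsf{vol}$ is area; $d$ is the distance between the centers of the two disks in the flat metric. *)

From Stdlib Require Import Reals ZArith.
Open Scope R_scope.

Definition point := (R * R)%type.

Definition eucl (p q : point) : R :=
  sqrt ((fst p - fst q) ^ 2 + (snd p - snd q) ^ 2).

(* A closed flat surface, up to isometry:
   - a flat torus R^2 / (Z u + Z v), u v linearly independent;
   - a flat Klein bottle R^2 / G, G generated by the glide reflection
     (x,y) |-> (x + a, -y) and the translation (x,y) |-> (x, y + b), a,b > 0. *)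
Inductive flat_surface :=
  | FlatTorus (u v : point)
  | FlatKlein (a b : R).

Definition valid_surface (N : flat_surface) : Prop :=
  match N with
  | FlatTorus u v => fst u * snd v - snd u * fst v <> 0
  | FlatKlein a b => 0 < a /\ 0 < b
  end.

(* The deck group, indexed by (m, n) in Z^2 (every element is of this form). *)
Definition act (N : flat_surface) (m n : Z) (p : point) : point :=
  match N with
  | FlatTorus u v =>
      (fst p + IZR m * fst u + IZR n * fst v,
       snd p + IZR m * snd u + IZR n * snd v)
  | FlatKlein a b =>
      (fst p + IZR m * a,
       (if Z.even m then snd p else - snd p) + IZR n * b)
  end.

Definition area (N : flat_surface) : R :=
  match N with
  | FlatTorus u v => Rabs (fst u * snd v - snd u * fst v)
  | FlatKlein a b => a * b
  end.

Definition flat_dist (N : flat_surface) (p q : point) (d : R) : Prop :=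
  (forall m n, d <= eucl p (act N m n q)) /\
  (forall d', (forall m n, d' <= eucl p (act N m n q)) -> d' <= d).

(* The open metric disk of radius r in N centered at the projection of p,
   as an invariant subset of R^2 (preimage under the covering map):
   points x whose class is at flat distance < r from the class of p. *)
Definition flat_disk (N : flat_surface) (p : point) (r : R) (x : point) : Prop :=
  exists m n, eucl (act N m n x) p < r.

(* The disk is embedded: the covering map restricted to the Euclidean
   disk B(p, r) is injective. *)
Definition embedded_disk (N : flat_surface) (p : point) (r : R) : Prop :=
  forall x y, eucl x p < r -> eucl y p < r ->
    (exists m n, y = act N m n x) -> x = y.

Definition disjoint_disks (N : flat_surface) (p q : point) (r : R) : Prop :=
  forall x, ~ (flat_disk N p r x /\ flat_disk N q r x).

Definition admissible (N : flat_surface) (p q : point) (h d : R) : Prop :=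
  valid_surface N /\ 0 < h /\
  embedded_disk N p (h / 2) /\ embedded_disk N q (h / 2) /\
  disjoint_disks N p q (h / 2) /\ flat_dist N p q d.

Definition objective (N : flat_surface) (h d : R) : R :=
  h * sqrt (4 * h ^ 2 + d ^ 2) / area N.

From Stdlib Require Import Reals ZArith Lra Lia Psatz List.
Open Scope R_scope.

(* The supremum is sqrt (5/3), attained by the hexagonal torus with two tangent disks of
   diameter 1; the key estimate is 3 h^2 (4 h^2 + d^2) <= 5 vol(N)^2.  Embeddedness and
   disjointness of the disks say that the deck orbits of the centres p and q are
   h-separated and that every translate of q lies at distance >= d >= h from p.
   On a torus, a Gauss-reduced basis (a, b) of the lattice, |a| <= |b| and
   2 |a.b| <= |a|^2, gives h <= |a| and 3 |a|^4 <= 4 vol^2, and some translate of q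
   satisfies 4 |a|^2 d^2 <= |a|^4 + vol^2.  On a Klein bottle with glide length a and
   translation length b, either a >= h and some translate of q lies within the
   a/2 x b/2 box around p, or a < h and glide separation forces the vertical offsets of q
   in the two columns adjacent to p to differ by at least sqrt (h^2 - a^2). *)

Definition d2 (z w : point) : R := (fst z - fst w) ^ 2 + (snd z - snd w) ^ 2.
Definition mid (z w : point) : point := ((fst z + fst w) / 2, (snd z + snd w) / 2).

Lemma d2_nonneg z w : 0 <= d2 z w.
Proof. unfold d2; apply Rplus_le_le_0_compat; apply pow2_ge_0. Qed.

Lemma d2_sym z w : d2 z w = d2 w z.
Proof. unfold d2; ring. Qed.

Lemma d2_mid_l z w : d2 (mid z w) z = d2 z w / 4.
Proof. unfold d2, mid; simpl; field. Qed.

Lemma d2_mid_r z w : d2 (mid z w) w = d2 z w / 4.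
Proof. unfold d2, mid; simpl; field. Qed.

Lemma d2_le_twice x y c : d2 x y <= 2 * d2 x c + 2 * d2 y c.
Proof.
  unfold d2.
  assert (0 <= (fst x - fst c + (fst y - fst c)) ^ 2) by apply pow2_ge_0.
  assert (0 <= (snd x - snd c + (snd y - snd c)) ^ 2) by apply pow2_ge_0.
  nra.
Qed.

Lemma eucl_lt_sq z w r : 0 <= r -> eucl z w < r <-> d2 z w < r ^ 2.
Proof.
  intros Hr; change (eucl z w) with (sqrt (d2 z w)).
  rewrite <- (sqrt_pow2 r Hr) at 1; split; intros H.
  - apply sqrt_lt_0_alt in H; exact H.
  - apply sqrt_lt_1_alt; split; [apply d2_nonneg | exact H].
Qed.

Lemma le_eucl_sq z w r : 0 <= r -> r <= eucl z w <-> r ^ 2 <= d2 z w.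
Proof.
  intros Hr; change (eucl z w) with (sqrt (d2 z w)).
  rewrite <- (sqrt_pow2 r Hr) at 1; split; intros H.
  - apply sqrt_le_0 in H; [exact H | nra | apply d2_nonneg].
  - apply sqrt_le_1_alt; exact H.
Qed.

Lemma floor_mult x a : 0 < a -> exists k : Z, 0 <= x - IZR k * a < a.
Proof.
  intros Ha; exists (up (x / a) - 1)%Z; rewrite minus_IZR.
  destruct (archimed (x / a)) as [H1 H2].
  assert (IZR (up (x / a)) * a > x / a * a) by (apply Rmult_gt_compat_r; lra).
  assert (IZR (up (x / a)) * a <= (x / a + 1) * a) by (apply Rmult_le_compat_r; lra).
  replace ((x / a + 1) * a) with (x + a) in * by (field; lra).
  replace (x / a * a) with x in * by (field; lra).
  simpl; lra.
Qed.

Lemma round_mult x a : 0 < a -> exists k : Z, 4 * (x - IZR k * a) ^ 2 <= a ^ 2.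
Proof.
  intros Ha; destruct (floor_mult (x + a / 2) a Ha) as [k Hk]; exists k; nra.
Qed.

Lemma rect_packing_ineq h X Y d :
  0 < h -> h ^ 2 <= X -> h ^ 2 <= Y -> h <= d -> 4 * d ^ 2 <= X + Y ->
  3 * h ^ 2 * (4 * h ^ 2 + d ^ 2) <= 5 * (X * Y).
Proof.
  intros.
  assert (0 <= (X - h ^ 2) * (Y - h ^ 2)) by (apply Rmult_le_pos; lra).
  assert (h ^ 2 <= d ^ 2) by nra.
  assert (0 <= h ^ 2 * (X + Y - 4 * d ^ 2)) by (apply Rmult_le_pos; nra).
  assert (0 <= h ^ 2 * (d ^ 2 - h ^ 2)) by (apply Rmult_le_pos; nra).
  nra.
Qed.

Lemma lattice_packing_ineq h X D2 d :
  0 < h -> h ^ 2 <= X -> 3 * X ^ 2 <= 4 * D2 -> h <= d -> 4 * X * d ^ 2 <= X ^ 2 + D2 ->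
  3 * h ^ 2 * (4 * h ^ 2 + d ^ 2) <= 5 * D2.
Proof.
  intros Hh HhX HD Hd Hc.
  assert (HX : 0 < X) by nra.
  replace D2 with (X * (D2 / X)) by (field; lra).
  assert (h ^ 2 <= d ^ 2) by nra.
  assert (3 * X <= 4 * (D2 / X)) by (apply (Rmult_le_reg_l X); [lra |]; field_simplify; nra).
  assert (4 * d ^ 2 <= X + D2 / X) by (apply (Rmult_le_reg_l X); [lra |]; field_simplify; nra).
  apply rect_packing_ineq; lra.
Qed.

(** * The deck group and the separation of its orbits *)

Lemma act_0 N z : act N 0 0 z = z.
Proof. destruct N, z; simpl; f_equal; ring. Qed.

Lemma act_inverse N m n : exists m' n', forall z,
  act N m' n' (act N m n z) = z /\ act N m n (act N m' n' z) = z.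
Proof.
  destruct N as [u v | a b].
  - exists (- m)%Z, (- n)%Z; intros [x y]; simpl; rewrite !opp_IZR.
    split; f_equal; ring.
  - exists (- m)%Z, (if Z.even m then (- n)%Z else n); intros [x y]; simpl.
    rewrite Z.even_opp; destruct (Z.even m); simpl; rewrite ?opp_IZR;
      split; f_equal; ring.
Qed.

Lemma d2_act N m n z w : d2 (act N m n z) (act N m n w) = d2 z w.
Proof. destruct N, z, w; unfold d2; simpl; try ring; destruct (Z.even m); ring. Qed.

Lemma act_fixpoint_free N m n z :
  valid_surface N -> (m <> 0 \/ n <> 0)%Z -> act N m n z <> z.
Proof.
  destruct N as [[u1 u2] [v1 v2] | a b], z as [x y]; simpl; intros Hv Hmn Heq;
    injection Heq; intros Ey Ex.
  - assert (E1 : IZR m * u1 + IZR n * v1 = 0) by lra.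
    assert (E2 : IZR m * u2 + IZR n * v2 = 0) by lra.
    assert (Em : IZR m * (u1 * v2 - u2 * v1) = 0).
    { transitivity ((IZR m * u1 + IZR n * v1) * v2 - (IZR m * u2 + IZR n * v2) * v1);
        [ring | rewrite E1, E2; ring]. }
    assert (En : IZR n * (u1 * v2 - u2 * v1) = 0).
    { transitivity ((IZR m * u2 + IZR n * v2) * u1 - (IZR m * u1 + IZR n * v1) * u2);
        [ring | rewrite E1, E2; ring]. }
    apply Rmult_integral in Em as [Em | Em]; [| contradiction].
    apply Rmult_integral in En as [En | En]; [| contradiction].
    apply eq_IZR in Em, En; lia.
  - destruct Hv as [Ha Hb].
    assert (Em : IZR m = 0) by nra; apply eq_IZR in Em; subst m; simpl in Ey.
    assert (En : IZR n = 0) by nra; apply eq_IZR in En; lia.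
Qed.

Definition self_separated (N : flat_surface) (p : point) (h : R) : Prop :=
  forall m n, (m <> 0 \/ n <> 0)%Z -> h ^ 2 <= d2 p (act N m n p).

Lemma embedded_self_separated N p h :
  valid_surface N -> 0 < h -> embedded_disk N p (h / 2) -> self_separated N p h.
Proof.
  intros Hv Hh Hemb m n Hmn.
  destruct (Rle_lt_dec (h ^ 2) (d2 p (act N m n p))) as [Hle | Hlt]; [exact Hle | exfalso].
  destruct (act_inverse N m n) as [m' [n' Hinv]].
  set (y := mid p (act N m n p)); set (x := act N m' n' y).
  assert (Hy : eucl y p < h / 2).
  { apply eucl_lt_sq; [lra |]; unfold y; rewrite d2_mid_l; lra. }
  assert (Hx : eucl x p < h / 2).
  { apply eucl_lt_sq; [lra |]; unfold x.
    rewrite <- (proj1 (Hinv p)), d2_act; unfold y; rewrite d2_mid_r; lra. }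
  assert (Hyx : y = act N m n x) by (unfold x; rewrite (proj2 (Hinv y)); reflexivity).
  apply (act_fixpoint_free N m n x Hv Hmn).
  rewrite <- Hyx; symmetry; apply Hemb; [exact Hx | exact Hy | exists m, n; exact Hyx].
Qed.

Lemma disjoint_separated N p q h m n :
  0 < h -> disjoint_disks N p q (h / 2) -> h <= eucl p (act N m n q).
Proof.
  intros Hh Hdis; apply le_eucl_sq; [lra |].
  destruct (Rle_lt_dec (h ^ 2) (d2 p (act N m n q))) as [Hle | Hlt]; [exact Hle | exfalso].
  destruct (act_inverse N m n) as [m' [n' Hinv]].
  set (x := mid p (act N m n q)).
  apply (Hdis x); split.
  - exists 0%Z, 0%Z; rewrite act_0; apply eucl_lt_sq; [lra |].
    unfold x; rewrite d2_mid_l; lra.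
  - exists m', n'; apply eucl_lt_sq; [lra |].
    rewrite <- (proj1 (Hinv q)), d2_act; unfold x; rewrite d2_mid_r; lra.
Qed.

Lemma admissible_constraints N p q h d :
  admissible N p q h d ->
  valid_surface N /\ 0 < h /\ h <= d /\ self_separated N p h /\ self_separated N q h /\
  forall m n, d ^ 2 <= d2 p (act N m n q).
Proof.
  intros (Hv & Hh & Hp & Hq & Hdis & Hd & Hdmax).
  assert (Hhd : h <= d) by (apply Hdmax; intros m n; apply disjoint_separated; assumption).
  repeat split; try assumption.
  - apply embedded_self_separated; assumption.
  - apply embedded_self_separated; assumption.
  - intros m n; apply le_eucl_sq; [lra | apply Hd].
Qed.

(** * Plane lattices *)

Definition norm2 (z : point) : R := fst z ^ 2 + snd z ^ 2.
Definition dot (z w : point) : R := fst z * fst w + snd z * snd w.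
Definition cross (z w : point) : R := fst z * snd w - snd z * fst w.

Definition lat (u v : point) (m n : Z) : point :=
  (IZR m * fst u + IZR n * fst v, IZR m * snd u + IZR n * snd v).

Lemma lagrange_identity a b : norm2 a * norm2 b = dot a b ^ 2 + cross a b ^ 2.
Proof. unfold norm2, dot, cross; ring. Qed.

Lemma cross_sq_le a b : cross a b ^ 2 <= norm2 a * norm2 b.
Proof. rewrite lagrange_identity; assert (0 <= dot a b ^ 2) by apply pow2_ge_0; lra. Qed.

Lemma norm2_pos_of_cross a b : cross a b <> 0 -> 0 < norm2 a.
Proof.
  intros H; assert (Hc := cross_sq_le a b).
  assert (0 < cross a b ^ 2) by (rewrite <- Rsqr_pow2; apply Rsqr_pos_lt; exact H).
  assert (0 <= norm2 a) by (unfold norm2; nra).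
  destruct (Req_dec (norm2 a) 0) as [E | E]; [rewrite E in Hc; lra | lra].
Qed.

Lemma lat_0 u v : lat u v 0 0 = (0, 0).
Proof. unfold lat; f_equal; simpl; ring. Qed.

Lemma lat_lat u v m1 n1 m2 n2 k1 k2 :
  lat (lat u v m1 n1) (lat u v m2 n2) k1 k2 =
  lat u v (k1 * m1 + k2 * m2) (k1 * n1 + k2 * n2).
Proof. unfold lat; simpl; rewrite !plus_IZR, !mult_IZR; f_equal; ring. Qed.

Lemma cross_lat u v m1 n1 m2 n2 :
  cross (lat u v m1 n1) (lat u v m2 n2) = IZR (m1 * n2 - m2 * n1) * cross u v.
Proof. unfold cross, lat; simpl; rewrite minus_IZR, !mult_IZR; ring. Qed.

Lemma norm2_lat a b k1 k2 :
  norm2 (lat a b k1 k2) =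
  IZR k1 ^ 2 * norm2 a + 2 * IZR k1 * IZR k2 * dot a b + IZR k2 ^ 2 * norm2 b.
Proof. unfold norm2, lat, dot; simpl; ring. Qed.

Lemma lat_coords_bounded u v f : cross u v <> 0 ->
  exists K : Z, forall m n, norm2 (lat u v m n) <= f -> (Z.abs m <= K /\ Z.abs n <= K)%Z.
Proof.
  intros HD; set (D := cross u v) in *.
  assert (HD2 : 0 < D ^ 2) by (rewrite <- Rsqr_pow2; apply Rsqr_pos_lt; exact HD).
  assert (Hu : 0 <= norm2 u) by (unfold norm2; nra).
  assert (Hv : 0 <= norm2 v) by (unfold norm2; nra).
  exists (up (f * (norm2 u + norm2 v) / D ^ 2)); intros m n Hf.
  assert (Hl : 0 <= norm2 (lat u v m n)) by (unfold norm2; nra).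
  assert (Hup := proj1 (archimed (f * (norm2 u + norm2 v) / D ^ 2))).
  assert (key : forall k : Z, (IZR k * D) ^ 2 <= f * (norm2 u + norm2 v) ->
            (Z.abs k <= up (f * (norm2 u + norm2 v) / D ^ 2))%Z).
  { intros k Hk.
    assert (IZR k ^ 2 <= f * (norm2 u + norm2 v) / D ^ 2).
    { apply (Rmult_le_reg_r (D ^ 2)); [lra |].
      unfold Rdiv; rewrite Rmult_assoc, Rinv_l, Rmult_1_r by lra; lra. }
    assert (Hk2 : IZR (k * k) < IZR (up (f * (norm2 u + norm2 v) / D ^ 2)))
      by (rewrite mult_IZR; lra).
    apply lt_IZR in Hk2; nia. }
  split; apply key.
  - replace (IZR m * D) with (cross (lat u v m n) v) by (unfold D, cross, lat; simpl; ring).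
    eapply Rle_trans; [apply cross_sq_le | nra].
  - replace (IZR n * D) with (cross u (lat u v m n)) by (unfold D, cross, lat; simpl; ring).
    eapply Rle_trans; [apply cross_sq_le | nra].
Qed.

Lemma list_argmin {T : Type} (f : T -> R) (l : list T) x0 :
  In x0 l -> exists x, In x l /\ forall y, In y l -> f x <= f y.
Proof.
  revert x0; induction l as [| a l IH]; intros x0 H; [destruct H |].
  destruct l as [| b l].
  - exists a; split; [left; reflexivity |]; intros y [<- | []]; lra.
  - destruct (IH b (or_introl eq_refl)) as [x [Hx Hmin]].
    destruct (Rle_dec (f a) (f x)).
    + exists a; split; [left; reflexivity |].
      intros y [<- | Hy]; [lra | specialize (Hmin y Hy); lra].
    + exists x; split; [right; exact Hx |].
      intros y [<- | Hy]; [lra | auto].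
Qed.

Lemma argmin_finite_sublevel {T : Type} (f : T -> R) (P : T -> bool) (l : list T) x0 :
  P x0 = true -> (forall x, P x = true -> f x <= f x0 -> In x l) ->
  exists x, P x = true /\ forall y, P y = true -> f x <= f y.
Proof.
  intros Hx0 Hl.
  assert (H0 : In x0 (filter P l)) by (apply filter_In; split; [apply Hl |]; auto; lra).
  destruct (list_argmin f (filter P l) x0 H0) as [x [Hx Hmin]].
  apply filter_In in Hx as [_ Hx].
  exists x; split; [exact Hx |]; intros y Hy.
  destruct (Rle_dec (f y) (f x0)) as [Hle | Hlt].
  - apply Hmin, filter_In; auto.
  - specialize (Hmin x0 H0); lra.
Qed.

Definition zrange (K : Z) : list Z :=
  map (fun i => Z.of_nat i - K)%Z (seq 0 (Z.to_nat (2 * K + 1))).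

Lemma in_zrange K z : (Z.abs z <= K)%Z -> In z (zrange K).
Proof.
  intros Hz; apply in_map_iff; exists (Z.to_nat (z + K)); split.
  - rewrite Z2Nat.id by lia; lia.
  - apply in_seq; lia.
Qed.

Definition basis_energy (u v : point) (t : (Z * Z) * (Z * Z)) : R :=
  let '((m1, n1), (m2, n2)) := t in norm2 (lat u v m1 n1) + norm2 (lat u v m2 n2).

Definition unimodular (t : (Z * Z) * (Z * Z)) : bool :=
  let '((m1, n1), (m2, n2)) := t in (Z.abs (m1 * n2 - m2 * n1) =? 1)%Z.

(* Bounded coordinates leave only finitely many bases below the energy of (u, v). *)
Lemma exists_min_energy_basis u v : cross u v <> 0 ->
  exists t, unimodular t = true /\
    forall t', unimodular t' = true -> basis_energy u v t <= basis_energy u v t'.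
Proof.
  intros HD; set (t0 := ((1, 0), (0, 1))%Z).
  destruct (lat_coords_bounded u v (basis_energy u v t0) HD) as [K HK].
  set (box := list_prod (zrange K) (zrange K)).
  apply (argmin_finite_sublevel _ _ (list_prod box box) t0); [reflexivity |].
  intros [[m1 n1] [m2 n2]] _ Hle.
  change (norm2 (lat u v m1 n1) + norm2 (lat u v m2 n2) <= basis_energy u v t0) in Hle.
  assert (0 <= norm2 (lat u v m1 n1)) by (unfold norm2; nra).
  assert (0 <= norm2 (lat u v m2 n2)) by (unfold norm2; nra).
  destruct (HK m1 n1) as [B1 C1]; [lra |].
  destruct (HK m2 n2) as [B2 C2]; [lra |].
  repeat apply in_prod; apply in_zrange; assumption.
Qed.

Lemma reduced_lattice_basis u v : cross u v <> 0 -> exists m1 n1 m2 n2 : Z,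
  Z.abs (m1 * n2 - m2 * n1) = 1%Z /\
  2 * Rabs (dot (lat u v m1 n1) (lat u v m2 n2)) <= norm2 (lat u v m1 n1) /\
  2 * Rabs (dot (lat u v m1 n1) (lat u v m2 n2)) <= norm2 (lat u v m2 n2).
Proof.
  intros HD; destruct (exists_min_energy_basis u v HD) as [[[m1 n1] [m2 n2]] [Ht Hmin]].
  apply Z.eqb_eq in Ht; exists m1, n1, m2, n2.
  set (A := norm2 (lat u v m1 n1)); set (B := norm2 (lat u v m2 n2));
    set (P := dot (lat u v m1 n1) (lat u v m2 n2)).
  assert (Hcomb : forall k1 k2, norm2 (lat u v (k1 * m1 + k2 * m2) (k1 * n1 + k2 * n2)) =
                    IZR k1 ^ 2 * A + 2 * IZR k1 * IZR k2 * P + IZR k2 ^ 2 * B)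
    by (intros; rewrite <- lat_lat; apply norm2_lat).
  assert (Hfirst : forall k1 k2,
            Z.abs ((k1 * m1 + k2 * m2) * n2 - m2 * (k1 * n1 + k2 * n2)) = 1%Z ->
            A + B <= norm2 (lat u v (k1 * m1 + k2 * m2) (k1 * n1 + k2 * n2)) + B).
  { intros k1 k2 Hk.
    apply (Hmin ((k1 * m1 + k2 * m2, k1 * n1 + k2 * n2), (m2, n2))%Z), Z.eqb_eq, Hk. }
  assert (Hsecond : forall k1 k2,
            Z.abs (m1 * (k1 * n1 + k2 * n2) - (k1 * m1 + k2 * m2) * n1) = 1%Z ->
            A + B <= A + norm2 (lat u v (k1 * m1 + k2 * m2) (k1 * n1 + k2 * n2))).
  { intros k1 k2 Hk.
    apply (Hmin ((m1, n1), (k1 * m1 + k2 * m2, k1 * n1 + k2 * n2))%Z), Z.eqb_eq, Hk. }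
  assert (H1 := Hfirst 1%Z 1%Z ltac:(lia)); assert (H2 := Hfirst 1%Z (-1)%Z ltac:(lia)).
  assert (H3 := Hsecond 1%Z 1%Z ltac:(lia)); assert (H4 := Hsecond (-1)%Z 1%Z ltac:(lia)).
  rewrite Hcomb in H1, H2, H3, H4.
  split; [exact Ht |]; split; unfold Rabs; destruct Rcase_abs; lra.
Qed.

(* Choose k2 to bring t within half a row of the lines parallel to a, then k1 along a. *)
Lemma lattice_cover a b t : cross a b <> 0 ->
  exists k1 k2, 4 * norm2 a * d2 t (lat a b k1 k2) <= norm2 a ^ 2 + cross a b ^ 2.
Proof.
  intros HD; set (D := cross a b) in *; set (X := norm2 a).
  assert (HX : 0 < X) by (apply (norm2_pos_of_cross a b); exact HD).
  destruct (round_mult (cross a t / D) 1 ltac:(lra)) as [k2 Hk2].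
  set (r := (fst t - IZR k2 * fst b, snd t - IZR k2 * snd b)).
  destruct (round_mult (dot r a / X) 1 ltac:(lra)) as [k1 Hk1].
  exists k1, k2.
  set (s := (fst t - fst (lat a b k1 k2), snd t - snd (lat a b k1 k2))).
  assert (Hds : d2 t (lat a b k1 k2) = norm2 s) by reflexivity.
  assert (Hdot : dot s a = X * (dot r a / X - IZR k1 * 1)).
  { unfold X, norm2 in *; unfold s, r, dot, lat; simpl; field; lra. }
  assert (Hcross : cross a s = D * (cross a t / D - IZR k2 * 1)).
  { unfold s, D, cross, lat; simpl; field; exact HD. }
  rewrite Hds, Rmult_assoc, (Rmult_comm (norm2 a)).
  change (norm2 a) with X.
  replace (norm2 s * X) with (dot s a ^ 2 + cross a s ^ 2)
    by (unfold X, dot, cross, norm2; ring).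
  rewrite Hdot, Hcross.
  assert (X ^ 2 * (4 * (dot r a / X - IZR k1 * 1) ^ 2) <= X ^ 2 * 1 ^ 2)
    by (apply Rmult_le_compat_l; nra).
  assert (D ^ 2 * (4 * (cross a t / D - IZR k2 * 1) ^ 2) <= D ^ 2 * 1 ^ 2)
    by (apply Rmult_le_compat_l; nra).
  nra.
Qed.

Lemma reduced_basis_packing a b t h d :
  0 < h -> h <= d -> cross a b <> 0 -> norm2 a <= norm2 b ->
  2 * Rabs (dot a b) <= norm2 a -> h ^ 2 <= norm2 a ->
  (forall k1 k2, d ^ 2 <= d2 t (lat a b k1 k2)) ->
  3 * h ^ 2 * (4 * h ^ 2 + d ^ 2) <= 5 * cross a b ^ 2.
Proof.
  intros Hh Hhd HD Hab Hdot Ha Hcov.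
  assert (HX : 0 < norm2 a) by (apply (norm2_pos_of_cross a b); exact HD).
  assert (HP : 4 * dot a b ^ 2 <= norm2 a ^ 2).
  { replace (4 * dot a b ^ 2) with ((2 * Rabs (dot a b)) ^ 2)
      by (rewrite <- !Rsqr_pow2, Rsqr_mult, <- Rsqr_abs; unfold Rsqr; ring).
    apply pow_incr; split; [apply Rmult_le_pos; [lra | apply Rabs_pos] | exact Hdot]. }
  assert (Hlag := lagrange_identity a b).
  destruct (lattice_cover a b t HD) as [k1 [k2 Hk]].
  apply (lattice_packing_ineq h (norm2 a)); try assumption.
  - nra.
  - specialize (Hcov k1 k2); nra.
Qed.

Lemma torus_packing_bound u v t h d :
  cross u v <> 0 -> 0 < h -> h <= d ->
  (forall m n, lat u v m n <> (0, 0) -> h ^ 2 <= norm2 (lat u v m n)) ->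
  (forall m n, d ^ 2 <= d2 t (lat u v m n)) ->
  3 * h ^ 2 * (4 * h ^ 2 + d ^ 2) <= 5 * cross u v ^ 2.
Proof.
  intros HD Hh Hhd Hsep Hcov.
  destruct (reduced_lattice_basis u v HD) as (m1 & n1 & m2 & n2 & Hdet & Ha & Hb).
  set (a := lat u v m1 n1) in *; set (b := lat u v m2 n2) in *.
  assert (Hcr : cross a b ^ 2 = cross u v ^ 2).
  { unfold a, b; rewrite cross_lat.
    destruct (Z.abs_spec (m1 * n2 - m2 * n1)) as [[_ E] | [_ E]]; rewrite Hdet in E.
    - rewrite <- E; simpl; ring.
    - replace (m1 * n2 - m2 * n1)%Z with (-1)%Z by lia; simpl; ring. }
  assert (HDab : cross a b <> 0).
  { intros E; apply (pow_nonzero _ 2 HD); rewrite <- Hcr, E; ring. }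
  assert (Hcov' : forall k1 k2, d ^ 2 <= d2 t (lat a b k1 k2))
    by (intros; unfold a, b; rewrite lat_lat; apply Hcov).
  assert (Hha : h ^ 2 <= norm2 a).
  { apply Hsep; intros E; apply HDab; unfold a in *; rewrite E; unfold cross; simpl; ring. }
  assert (Hhb : h ^ 2 <= norm2 b).
  { apply Hsep; intros E; apply HDab; unfold b in *; rewrite E; unfold cross; simpl; ring. }
  rewrite <- Hcr.
  destruct (Rle_dec (norm2 a) (norm2 b)) as [Hab | Hba].
  - apply (reduced_basis_packing a b t); assumption.
  - replace (cross a b ^ 2) with (cross b a ^ 2) by (unfold cross; ring).
    apply (reduced_basis_packing b a t); try assumption; try lra.
    + intros E; apply HDab; unfold cross in *; lra.
    + replace (dot b a) with (dot a b) by (unfold dot; ring); exact Hb.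
    + intros k1 k2; replace (lat b a k1 k2) with (lat a b k2 k1)
        by (unfold lat; f_equal; ring); apply Hcov'.
Qed.

(** * Flat tori *)

Lemma act_torus u v m n z :
  act (FlatTorus u v) m n z = (fst z + fst (lat u v m n), snd z + snd (lat u v m n)).
Proof. unfold lat; simpl; f_equal; ring. Qed.

Lemma d2_act_torus u v p q m n :
  d2 p (act (FlatTorus u v) m n q) = d2 (fst p - fst q, snd p - snd q) (lat u v m n).
Proof. unfold d2, lat; simpl; ring. Qed.

Lemma torus_embedded_disk u v p r : 0 < r ->
  (forall m n, lat u v m n <> (0, 0) -> (2 * r) ^ 2 <= norm2 (lat u v m n)) ->
  embedded_disk (FlatTorus u v) p r.
Proof.
  intros Hr Hlat x y Hx Hy [m [n Hyx]].
  apply eucl_lt_sq in Hx, Hy; try lra.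
  assert (Hxy := d2_le_twice y x p).
  rewrite act_torus in Hyx; specialize (Hlat m n).
  set (l := lat u v m n) in *.
  assert (E : d2 y x = norm2 l) by (rewrite Hyx; unfold d2, norm2; simpl; ring).
  destruct (Req_dec (norm2 l) 0) as [Hl | Hl].
  - unfold norm2 in Hl.
    assert (fst l = 0) by nra; assert (snd l = 0) by nra.
    rewrite Hyx; destruct x; simpl in *; f_equal; lra.
  - exfalso; assert ((2 * r) ^ 2 <= norm2 l).
    { apply Hlat; intros E0; apply Hl; rewrite E0; unfold norm2; simpl; ring. }
    nra.
Qed.

Lemma torus_disjoint_disks u v p q r : 0 < r ->
  (forall m n, (2 * r) ^ 2 <= d2 p (act (FlatTorus u v) m n q)) ->
  disjoint_disks (FlatTorus u v) p q r.
Proof.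
  intros Hr Hsep x [[m [n Hp]] [m' [n' Hq]]].
  apply eucl_lt_sq in Hp, Hq; try lra.
  set (y := act (FlatTorus u v) m' n' x) in Hq.
  assert (Hxy : act (FlatTorus u v) m n x = act (FlatTorus u v) (m - m') (n - n') y)
    by (unfold y; simpl; rewrite !minus_IZR; f_equal; ring).
  rewrite Hxy in Hp; rewrite <- (d2_act (FlatTorus u v) (m - m') (n - n')) in Hq.
  assert (Htri := d2_le_twice p (act (FlatTorus u v) (m - m') (n - n') q)
                    (act (FlatTorus u v) (m - m') (n - n') y)).
  rewrite d2_sym in Hp, Hq.
  specialize (Hsep (m - m')%Z (n - n')%Z); nra.
Qed.

(** * Flat Klein bottles *)

Lemma strip_poly_ineq a h x u P :
  0 < h -> 0 <= x -> 0 <= u -> x + u = a -> 3 * h ^ 2 <= 4 * a ^ 2 -> a <= h ->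
  h ^ 2 - x ^ 2 <= P -> 4 * h ^ 2 - 3 * a ^ 2 - u ^ 2 <= P ->
  12 * h ^ 4 + 3 * h ^ 2 * x ^ 2 <= (20 * a ^ 2 - 3 * h ^ 2) * P.
Proof.
  intros.
  assert (0 <= 20 * a ^ 2 - 3 * h ^ 2) by nra.
  destruct (Rle_dec (4 * h ^ 2 - 3 * a ^ 2 - u ^ 2) (h ^ 2 - x ^ 2)).
  - assert (12 * h ^ 4 + 3 * h ^ 2 * x ^ 2 <= (20 * a ^ 2 - 3 * h ^ 2) * (h ^ 2 - x ^ 2)).
    { assert (Hy : 0 <= 2 * a * x <= 4 * a ^ 2 - 3 * h ^ 2) by (split; nra).
      assert ((2 * a * x) ^ 2 <= (4 * a ^ 2 - 3 * h ^ 2) ^ 2) by (apply pow_incr; lra).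
      assert (0 <= (4 * a ^ 2 - 3 * h ^ 2) * (h ^ 2 - a ^ 2)) by (apply Rmult_le_pos; nra).
      nra. }
    nra.
  - assert (12 * h ^ 4 + 3 * h ^ 2 * x ^ 2 <=
              (20 * a ^ 2 - 3 * h ^ 2) * (4 * h ^ 2 - 3 * a ^ 2 - u ^ 2)).
    { set (t := 4 * a ^ 2 - 3 * h ^ 2); set (s := 3 * h ^ 2 - 4 * a ^ 2 + 2 * a * x).
      assert (0 <= s) by (unfold s; nra).
      assert (s <= (3 * h ^ 2 - t) / 2) by (unfold s, t; nra).
      assert (0 <= t * (h ^ 2 - t)) by (apply Rmult_le_pos; unfold t; nra).
      assert (0 <= s * (12 * h ^ 2 - 5 * t - 5 * s)) by (apply Rmult_le_pos; unfold t in *; nra).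
      assert (u = a - x) by lra; subst u; unfold s, t in *; nra. }
    nra.
Qed.

Lemma thin_strip_ineq a b h d x u phi gam :
  0 < h -> h <= 2 * a -> a < h -> h <= d -> 0 <= x -> 0 <= u -> x + u = a ->
  0 <= gam <= phi -> h ^ 2 - a ^ 2 <= (phi - gam) ^ 2 -> 2 * phi <= b ->
  d ^ 2 <= x ^ 2 + phi ^ 2 -> d ^ 2 <= u ^ 2 + gam ^ 2 ->
  3 * h ^ 2 * (4 * h ^ 2 + d ^ 2) <= 5 * (a * b) ^ 2.
Proof.
  intros Hh Ha2 Hah Hhd Hx Hu Hxu Hgam Hsep Hb Hd1 Hd2.
  assert (Hb2 : 4 * phi ^ 2 <= b ^ 2) by nra.
  enough (3 * h ^ 2 * (4 * h ^ 2 + d ^ 2) <= 20 * a ^ 2 * phi ^ 2) by nra.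
  set (c := sqrt (h ^ 2 - a ^ 2)).
  assert (Hc2 : c ^ 2 = h ^ 2 - a ^ 2) by (apply pow2_sqrt; nra).
  assert (Hc0 : 0 <= c) by apply sqrt_pos.
  assert (Hc : c <= phi - gam) by (apply Rsqr_incr_0_var; [rewrite !Rsqr_pow2 |]; lra).
  set (w := sqrt (h ^ 2 - u ^ 2)).
  assert (Hw2 : w ^ 2 = h ^ 2 - u ^ 2) by (apply pow2_sqrt; nra).
  assert (Hw0 : 0 <= w) by apply sqrt_pos.
  assert (Hwc : c <= w) by (apply Rsqr_incr_0_var; [rewrite !Rsqr_pow2 |]; nra).
  set (psi := phi - c).
  assert (Hpsi : w <= psi) by (apply Rsqr_incr_0_var; [rewrite !Rsqr_pow2 |]; unfold psi; nra).
  assert (Hd2' : d ^ 2 <= u ^ 2 + psi ^ 2) by (unfold psi; nra).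
  assert (h ^ 2 <= d ^ 2) by nra.
  destruct (Rle_dec (4 * a ^ 2) (3 * h ^ 2)).
  - replace phi with (psi + c) by (unfold psi; ring).
    assert (0 <= (psi - w) * (20 * a ^ 2 * (psi + w + 2 * c) - 3 * h ^ 2 * (psi + w))).
    { apply Rmult_le_pos; [lra |].
      assert (0 <= 20 * a ^ 2 - 3 * h ^ 2) by nra.
      assert (0 <= (20 * a ^ 2 - 3 * h ^ 2) * (psi + w)) by (apply Rmult_le_pos; lra).
      assert (0 <= a ^ 2 * c) by (apply Rmult_le_pos; nra).
      nra. }
    assert (0 <= (4 * a ^ 2 - h ^ 2) * (3 * h ^ 2 - 4 * a ^ 2)) by (apply Rmult_le_pos; nra).
    assert (4 * c ^ 2 <= (w + c) ^ 2) by nra.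
    nra.
  - assert (12 * h ^ 4 + 3 * h ^ 2 * x ^ 2 <= (20 * a ^ 2 - 3 * h ^ 2) * phi ^ 2).
    { apply (strip_poly_ineq a h x u (phi ^ 2)); try lra.
      assert ((c + w) ^ 2 <= phi ^ 2) by (apply pow_incr; unfold psi in Hpsi; lra).
      nra. }
    assert (3 * h ^ 2 * d ^ 2 <= 3 * h ^ 2 * (x ^ 2 + phi ^ 2)) by (apply Rmult_le_compat_l; nra).
    nra.
Qed.

Lemma abs_diff_sq c e0 e1 :
  c <= (e0 + e1) ^ 2 -> c <= (e0 - e1) ^ 2 -> c <= (Rabs e0 - Rabs e1) ^ 2.
Proof.
  unfold Rabs; destruct (Rcase_abs e0), (Rcase_abs e1); intros H1 H2;
    [ replace ((- e0 - - e1) ^ 2) with ((e0 - e1) ^ 2) by ring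
    | replace ((- e0 - e1) ^ 2) with ((e0 + e1) ^ 2) by ring
    | replace ((e0 - - e1) ^ 2) with ((e0 + e1) ^ 2) by ring
    | ]; assumption.
Qed.

Lemma klein_thin_bound a b h d x e0 e1 :
  0 < h -> h <= 2 * a -> a < h -> h <= d -> 0 <= x <= a -> 0 < b ->
  4 * e0 ^ 2 <= b ^ 2 -> 4 * e1 ^ 2 <= b ^ 2 ->
  h ^ 2 - a ^ 2 <= (e0 + e1) ^ 2 -> h ^ 2 - a ^ 2 <= (e0 - e1) ^ 2 ->
  d ^ 2 <= x ^ 2 + e0 ^ 2 -> d ^ 2 <= (a - x) ^ 2 + e1 ^ 2 ->
  3 * h ^ 2 * (4 * h ^ 2 + d ^ 2) <= 5 * (a * b) ^ 2.
Proof.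
  intros Hh Ha2 Hah Hhd Hx Hb He0 He1 Hsum Hdiff Hd0 Hd1.
  assert (Hsep := abs_diff_sq _ e0 e1 Hsum Hdiff).
  assert (Hb0 : 2 * Rabs e0 <= b)
    by (apply Rsqr_incr_0_var; [rewrite !Rsqr_pow2, Rpow_mult_distr, pow2_abs |]; lra).
  assert (Hb1 : 2 * Rabs e1 <= b)
    by (apply Rsqr_incr_0_var; [rewrite !Rsqr_pow2, Rpow_mult_distr, pow2_abs |]; lra).
  rewrite <- (pow2_abs e0) in Hd0; rewrite <- (pow2_abs e1) in Hd1.
  assert (0 <= Rabs e0) by apply Rabs_pos; assert (0 <= Rabs e1) by apply Rabs_pos.
  destruct (Rle_dec (Rabs e1) (Rabs e0)).
  - apply (thin_strip_ineq a b h d x (a - x) (Rabs e0) (Rabs e1)); lra.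
  - apply (thin_strip_ineq a b h d (a - x) x (Rabs e1) (Rabs e0)); lra.
Qed.

Lemma d2_act_klein a b p q m n :
  d2 p (act (FlatKlein a b) m n q) =
  (fst p - fst q - IZR m * a) ^ 2 +
  (snd p - (if Z.even m then snd q else - snd q) - IZR n * b) ^ 2.
Proof. unfold d2; simpl; ring. Qed.

Lemma klein_self_separated a b p h : self_separated (FlatKlein a b) p h ->
  h ^ 2 <= b ^ 2 /\ h ^ 2 <= 4 * a ^ 2 /\
  forall s n, (s = snd p \/ s = - snd p) -> h ^ 2 - a ^ 2 <= (2 * s - IZR n * b) ^ 2.
Proof.
  intros Hp; repeat split.
  - specialize (Hp 0%Z 1%Z ltac:(lia)); rewrite d2_act_klein in Hp; simpl in Hp; nra.
  - specialize (Hp 2%Z 0%Z ltac:(lia)); rewrite d2_act_klein in Hp; simpl in Hp; nra.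
  - intros s n [-> | ->].
    + specialize (Hp 1%Z n ltac:(lia)); rewrite d2_act_klein in Hp; simpl in Hp; nra.
    + specialize (Hp 1%Z (- n)%Z ltac:(lia)); rewrite d2_act_klein, opp_IZR in Hp;
        simpl in Hp; nra.
Qed.

Lemma klein_packing_bound a b p q h d :
  0 < a -> 0 < b -> 0 < h -> h <= d ->
  self_separated (FlatKlein a b) p h -> self_separated (FlatKlein a b) q h ->
  (forall m n, d ^ 2 <= d2 p (act (FlatKlein a b) m n q)) ->
  3 * h ^ 2 * (4 * h ^ 2 + d ^ 2) <= 5 * (a * b) ^ 2.
Proof.
  intros Ha Hb Hh Hhd Hp Hq Hc.
  destruct (klein_self_separated a b p h Hp) as (Hhb & Hha & Hglide_p).
  destruct (klein_self_separated a b q h Hq) as (_ & _ & Hglide_q).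
  setoid_rewrite d2_act_klein in Hc.
  set (delta := fst p - fst q) in Hc.
  destruct (Rle_dec h a) as [Hah | Hah].
  - destruct (round_mult delta a Ha) as [m Hm].
    destruct (round_mult (snd p - (if Z.even m then snd q else - snd q)) b Hb) as [n Hn].
    specialize (Hc m n).
    replace ((a * b) ^ 2) with (a ^ 2 * b ^ 2) by ring.
    apply rect_packing_ineq; nra.
  - destruct (floor_mult delta a Ha) as [m Hm].
    set (x := delta - IZR m * a) in Hm.
    set (s := if Z.even m then snd q else - snd q).
    assert (Hs : s = snd q \/ s = - snd q) by (unfold s; destruct (Z.even m); auto).
    assert (Hs' : (if Z.even (m + 1) then snd q else - snd q) = - s)
      by (unfold s; rewrite Z.even_add; destruct (Z.even m); simpl; ring).
    destruct (round_mult (snd p - s) b Hb) as [n0 Hn0].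
    destruct (round_mult (snd p + s) b Hb) as [n1 Hn1].
    assert (Hd0 := Hc m n0); assert (Hd1 := Hc (m + 1)%Z n1).
    rewrite Hs', plus_IZR in Hd1; fold s x in Hd0.
    replace (delta - (IZR m + 1) * a) with (- (a - x)) in Hd1 by (unfold x; ring).
    apply (klein_thin_bound a b h d x (snd p - s - IZR n0 * b) (snd p + s - IZR n1 * b));
      try nra.
    + specialize (Hglide_p (snd p) (n0 + n1)%Z (or_introl eq_refl)).
      rewrite plus_IZR in Hglide_p; nra.
    + specialize (Hglide_q s (n1 - n0)%Z Hs).
      rewrite minus_IZR in Hglide_q; nra.
Qed.

(** * The extremal configuration *)

Lemma area_pos N : valid_surface N -> 0 < area N.
Proof.
  destruct N as [u v | a b]; simpl; intros H.
  - apply Rabs_pos_lt; exact H.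
  - destruct H; nra.
Qed.

Lemma packing_inequality N p q h d :
  admissible N p q h d -> 3 * h ^ 2 * (4 * h ^ 2 + d ^ 2) <= 5 * area N ^ 2.
Proof.
  intros Hadm; destruct (admissible_constraints N p q h d Hadm)
    as (Hv & Hh & Hhd & Hp & Hq & Hc).
  destruct N as [u v | a b]; cbn [valid_surface area] in Hv |- *.
  - rewrite pow2_abs.
    apply (torus_packing_bound u v (fst p - fst q, snd p - snd q)); try assumption.
    + intros m n Hmn.
      assert (Hmn' : (m <> 0 \/ n <> 0)%Z).
      { destruct (Z.eq_dec m 0), (Z.eq_dec n 0); subst; auto; now rewrite lat_0 in Hmn. }
      specialize (Hp m n Hmn'); rewrite d2_act_torus in Hp.
      unfold d2, norm2 in *; simpl in *; nra.
    + intros m n; rewrite <- d2_act_torus; apply Hc.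
  - destruct Hv as [Ha Hb]; apply (klein_packing_bound a b p q); assumption.
Qed.

Lemma objective_le N p q h d : admissible N p q h d -> objective N h d <= sqrt 5 / sqrt 3.
Proof.
  intros Hadm; assert (Hkey := packing_inequality N p q h d Hadm).
  destruct Hadm as [Hv [Hh _]]; assert (HA := area_pos N Hv).
  assert (H3 : 0 < sqrt 3) by (apply sqrt_lt_R0; lra).
  assert (H5 : 0 < sqrt 5) by (apply sqrt_lt_R0; lra).
  unfold objective; set (Q := 4 * h ^ 2 + d ^ 2) in *.
  assert (HQ : 0 <= Q) by (unfold Q; nra).
  apply Rsqr_incr_0_var; [rewrite !Rsqr_pow2 | apply Rlt_le, Rdiv_lt_0_compat; lra].
  replace ((h * sqrt Q / area N) ^ 2) with (h ^ 2 * sqrt Q ^ 2 / area N ^ 2) by (field; lra).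
  replace ((sqrt 5 / sqrt 3) ^ 2) with (sqrt 5 ^ 2 / sqrt 3 ^ 2) by (field; lra).
  rewrite !pow2_sqrt by lra.
  apply (Rmult_le_reg_r (3 * area N ^ 2)); [nra |].
  replace (h ^ 2 * Q / area N ^ 2 * (3 * area N ^ 2)) with (3 * h ^ 2 * Q) by (field; lra).
  replace (5 / 3 * (3 * area N ^ 2)) with (5 * area N ^ 2) by field.
  exact Hkey.
Qed.

Lemma one_le_sq_IZR (k : Z) : k <> 0%Z -> 1 <= IZR k ^ 2.
Proof.
  intros Hk; replace (IZR k ^ 2) with (IZR (k * k)) by (rewrite mult_IZR; ring).
  apply IZR_le; nia.
Qed.

Lemma quarter_le_sq_half_IZR (k : Z) : 1 / 4 <= (IZR k + 1 / 2) ^ 2.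
Proof.
  destruct (Z_le_gt_dec 0 k) as [Hk | Hk].
  - apply IZR_le in Hk; nra.
  - assert (Hk' : (k <= -1)%Z) by lia; apply IZR_le in Hk'; nra.
Qed.

(* Together the orbits of hex_p and hex_q form the hexagonal lattice of mesh 1, so all
   the disks of diameter 1 are tangent. *)
Definition hex_torus : flat_surface := FlatTorus (1, 0) (0, sqrt 3).

Definition hex_p : point := (0, 0).
Definition hex_q : point := (1 / 2, sqrt 3 / 2).

Lemma sqrt3_sq : sqrt 3 ^ 2 = 3.
Proof. apply pow2_sqrt; lra. Qed.

Lemma hex_embedded_disk c : embedded_disk hex_torus c (1 / 2).
Proof.
  apply torus_embedded_disk; [lra |]; intros m n Hmn.
  replace (norm2 (lat (1, 0) (0, sqrt 3) m n)) with (IZR m ^ 2 + sqrt 3 ^ 2 * IZR n ^ 2)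
    by (unfold norm2, lat; cbn [fst snd]; ring).
  rewrite sqrt3_sq.
  assert (0 <= IZR m ^ 2) by apply pow2_ge_0; assert (0 <= IZR n ^ 2) by apply pow2_ge_0.
  destruct (Z.eq_dec m 0) as [-> | Hm]; [destruct (Z.eq_dec n 0) as [-> | Hn] |].
  - now rewrite lat_0 in Hmn.
  - apply one_le_sq_IZR in Hn; lra.
  - apply one_le_sq_IZR in Hm; lra.
Qed.

Lemma hex_cross_dist m n : d2 hex_p (act hex_torus m n hex_q) =
  (IZR m + 1 / 2) ^ 2 + 3 * (IZR n + 1 / 2) ^ 2.
Proof.
  rewrite <- sqrt3_sq; unfold d2, hex_p, hex_q, hex_torus, act; cbn [fst snd]; field.
Qed.

Lemma hex_admissible : admissible hex_torus hex_p hex_q 1 1.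
Proof.
  assert (Hsep : forall m n, 1 <= d2 hex_p (act hex_torus m n hex_q)).
  { intros m n; rewrite hex_cross_dist.
    assert (H1 := quarter_le_sq_half_IZR m); assert (H2 := quarter_le_sq_half_IZR n); lra. }
  assert (H3 : 0 < sqrt 3) by (apply sqrt_lt_R0; lra).
  repeat split.
  - simpl; lra.
  - lra.
  - apply hex_embedded_disk.
  - apply hex_embedded_disk.
  - apply torus_disjoint_disks; [lra |]; intros m n.
    replace ((2 * (1 / 2)) ^ 2) with 1 by field; apply Hsep.
  - intros m n; apply le_eucl_sq; [lra |]; rewrite pow1; apply Hsep.
  - intros d' Hd'; specialize (Hd' 0%Z 0%Z).
    rewrite act_0 in Hd'; change (eucl hex_p hex_q) with (sqrt (d2 hex_p hex_q)) in Hd'.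
    replace (d2 hex_p hex_q) with 1 in Hd'
      by (rewrite <- (act_0 hex_torus hex_q), hex_cross_dist; simpl; field).
    rewrite sqrt_1 in Hd'; exact Hd'.
Qed.

Lemma hex_objective : objective hex_torus 1 1 = sqrt 5 / sqrt 3.
Proof.
  unfold objective, hex_torus, area; cbn [fst snd].
  replace (4 * 1 ^ 2 + 1 ^ 2) with 5 by ring.
  replace (1 * sqrt 3 - 0 * 0) with (sqrt 3) by ring.
  rewrite Rabs_pos_eq by apply sqrt_pos.
  unfold Rdiv; ring.
Qed.

Theorem lemma6 :
  exists (N : flat_surface) (p q : point) (h d : R),
    admissible N p q h d /\
    (forall (N' : flat_surface) (p' q' : point) (h' d' : R),
        admissible N' p' q' h' d' -> objective N' h' d' <= objective N h d).
Proof.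
  exists hex_torus, hex_p, hex_q, 1, 1; split; [exact hex_admissible |].
  intros N' p' q' h' d' Hadm; rewrite hex_objective; exact (objective_le N' p' q' h' d' Hadm).
Qed.
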